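(* Let $\alpha,\beta\in(0,1]$ and let $L(t,u,v,w):\mathbb{T}^\kappa\times\mathbb{R}^3\to\mathbb{R}$ have continuous second-order partial derivatives in $(u,v,w)$. Consider problem (P): minimize $$\mathcal{L}(y)=\sum_{t=a}^{b-1}L\bigl(t,y(t+1),({}_a\Delta_t^\alpha y)(t),({}_t\Delta_b^\beta y)(t)\bigr)$$ over $y:\mathbb{T}\to\mathbb{R}$ with $y(a)=A$, $y(b)=B$ ($A,B\in\mathbb{R}$ fixed). If $\tilde y$ is a local minimizer for (P), then for all $t\in\mathbb{T}^{\kappa^2}=\{a,\dots,b-2\}$, $$L_u[\tilde y](t)+\bigl({}_t\Delta_{\rho(b)}^{\alpha}L_v[\tilde y]\bigr)(t)+\bigl({}_a\Delta_t^{\beta}L_w[\tilde y]\bigr)(t)=0,$$ where $[y](s)=(s,y(s+1),({}_a\Delta_s^\alpha y)(s),({}_s\Delta_b^\beta y)(s))$ and $L_v[\tilde y]$, $L_w[\tilde y]$ denote the functions $s\mapsto L_v([\tilde y](s))$, $s\mapsto L_w([\tilde y](s))$ on $\{a,\dots,b-1\}$.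
   Context: Let $a\in\mathbb{R}$, $b=a+k$ with $k\in\mathbb{N}$, $k\ge2$, $\mathbb{T}=\{a,\dots,b\}$, $\mathbb{T}^\kappa=\{a,\dots,b-1\}$, $\sigma(t)=t+1$, $\rho(t)=t-1$, $\Delta g(t)=g(t+1)-g(t)$. For real $x,y$, $x^{(y)}:=\Gamma(x+1)/\Gamma(x+1-y)$ (division at a pole yields zero). For $c\in\mathbb{T}$, $g$ on $\{a,\dots,c\}$, $\nu\ge0$: $({}_a\Delta_t^{-\nu}g)(t):=g(t)+\frac{\nu}{\Gamma(\nu+1)}\sum_{s=a}^{t-1}(t+\nu-\sigma(s))^{(\nu-1)}g(s)$ and $({}_t\Delta_c^{-\nu}g)(t):=g(t)+\frac{\nu}{\Gamma(\nu+1)}\sum_{s=t+1}^{c}(s+\nu-\sigma(t))^{(\nu-1)}g(s)$, $t\in\{a,\dots,c\}$. For $0<\alpha\le1$, $\mu=1-\alpha$, and $t\in\{a,\dots,c-1\}$: $({}_a\Delta_t^{\alpha}g)(t):=\Delta({}_a\Delta^{-\mu}g)(t)$, $({}_t\Delta_c^{\alpha}g)(t):=-\Delta({}_t\Delta_c^{-\mu}g)(t)$. Norm on functions $y:\mathbb{T}\to\mathbb{R}$: $\|y\|=\max_{t\in\mathbb{T}^\kappa}|y(t+1)|+\max_{t\in\mathbb{T}^\kappa}|({}_a\Delta_t^\alpha y)(t)|+\max_{t\in\mathbb{T}^\kappa}|({}_t\Delta_b^\beta y)(t)|$. A function $\tilde y$ with $\tilde y(a)=A$, $\tilde y(b)=B$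 is a local minimizer for (P) if there is $\delta>0$ with $\mathcal{L}(\tilde y)\le\mathcal{L}(y)$ for all $y$ with $y(a)=A$, $y(b)=B$, $\|y-\tilde y\|<\delta$. *)

From Stdlib Require Import Reals Lra Lia Arith ClassicalEpsilon.
Open Scope R_scope.

Fixpoint rsum (f : nat -> R) (n : nat) : R :=
  match n with O => 0 | S m => rsum f m + f m end.

Fixpoint rmax (f : nat -> R) (n : nat) : R :=
  match n with O => 0 | S m => Rmax (rmax f m) (f m) end.

(* Euler Gamma function via Gauss' limit formula
   Gamma x = lim n! n^x / (x (x+1) ... (x+n)),  x not a nonpositive integer *)
Fixpoint poch_prod (x : R) (n : nat) : R :=
  match n with O => x | S m => poch_prod x m * (x + INR (S m)) end.
Definition gauss_seq (x : R) (n : nat) : R :=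
  INR (fact n) * Rpower (INR n) x / poch_prod x n.
Definition Gamma (x : R) : R :=
  epsilon (inhabits 0) (fun l => Un_cv (gauss_seq x) l).

Definition is_pole (z : R) : Prop := exists n : nat, z = - INR n.

(* x^(y) := Gamma(x+1)/Gamma(x+1-y), zero when the denominator is at a pole *)
Definition gpow (x y : R) : R :=
  if excluded_middle_informative (is_pole (x + 1 - y)) then 0
  else Gamma (x + 1) / Gamma (x + 1 - y).

(* Time scale T = {a, a+1, ..., a+k}; a function on T is encoded by
   g : nat -> R, g i = value at a + i.  Offsets n denote t = a + n. *)

(* (_a Delta_t^{-nu} g)(t), t = a + n *)
Definition LFS (a nu : R) (g : nat -> R) (n : nat) : R :=
  g n + nu / Gamma (nu + 1) *
    rsum (fun i => gpow ((a + INR n) + nu - (a + INR i + 1)) (nu - 1) * g i) n.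

(* (_t Delta_c^{-nu} g)(t), t = a + n, c = a + m *)
Definition RFS (a nu : R) (m : nat) (g : nat -> R) (n : nat) : R :=
  g n + nu / Gamma (nu + 1) *
    rsum (fun j => gpow ((a + INR (n + 1 + j)%nat) + nu - (a + INR n + 1)) (nu - 1)
                   * g (n + 1 + j)%nat) (m - n)%nat.

(* left Riemann-Liouville type difference (_a Delta_t^alpha g)(t), t = a+n *)
Definition LFD (a alpha : R) (g : nat -> R) (n : nat) : R :=
  LFS a (1 - alpha) g (n + 1)%nat - LFS a (1 - alpha) g n.

(* right difference (_t Delta_c^beta g)(t), t = a+n, c = a+m *)
Definition RFD (a beta : R) (m : nat) (g : nat -> R) (n : nat) : R :=
  - (RFS a (1 - beta) m g (n + 1)%nat - RFS a (1 - beta) m g n).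

Definition onT (a : R) (y : R -> R) : nat -> R := fun i => y (a + INR i).

Definition Lfun (a : R) (k : nat) (alpha beta : R) (L : R -> R -> R -> R -> R)
  (y : R -> R) : R :=
  rsum (fun n => L (a + INR n) (onT a y (n + 1)%nat) (LFD a alpha (onT a y) n)
                   (RFD a beta k (onT a y) n)) k.

Definition ynorm (a : R) (k : nat) (alpha beta : R) (y : R -> R) : R :=
  rmax (fun n => Rabs (onT a y (n + 1)%nat)) k
  + rmax (fun n => Rabs (LFD a alpha (onT a y) n)) k
  + rmax (fun n => Rabs (RFD a beta k (onT a y) n)) k.

Definition local_minimizer (a : R) (k : nat) (alpha beta : R)
  (L : R -> R -> R -> R -> R) (A B : R) (yt : R -> R) : Prop :=
  yt a = A /\ yt (a + INR k) = B /\
  exists delta, delta > 0 /\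
    forall y : R -> R, y a = A -> y (a + INR k) = B ->
      ynorm a k alpha beta (fun s => y s - yt s) < delta ->
      Lfun a k alpha beta L yt <= Lfun a k alpha beta L y.

Definition app3 (f : R -> R -> R -> R) (i : nat) (x u v w : R) : R :=
  match i with O => f x v w | 1%nat => f u x w | _ => f u v x end.
Definition coord3 (i : nat) (u v w : R) : R :=
  match i with O => u | 1%nat => v | _ => w end.

Definition is_partial3 (f : R -> R -> R -> R) (i : nat) (g : R -> R -> R -> R) : Prop :=
  forall u v w, derivable_pt_lim (fun x => app3 f i x u v w) (coord3 i u v w) (g u v w).

Definition cont3 (f : R -> R -> R -> R) : Prop :=
  forall u v w eps, eps > 0 -> exists delta, delta > 0 /\
    forall u' v' w', Rabs (u' - u) < delta -> Rabs (v' - v) < delta ->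
      Rabs (w' - w) < delta -> Rabs (f u' v' w' - f u v w) < eps.

Definition C2_3 (f : R -> R -> R -> R) : Prop :=
  exists (D : nat -> R -> R -> R -> R) (DD : nat -> nat -> R -> R -> R -> R),
    (forall i, (i < 3)%nat -> is_partial3 f i (D i)) /\
    (forall i, (i < 3)%nat -> cont3 (D i)) /\
    (forall i j, (i < 3)%nat -> (j < 3)%nat -> is_partial3 (D i) j (DD i j)) /\
    (forall i j, (i < 3)%nat -> (j < 3)%nat -> cont3 (DD i j)).

From Stdlib Require Import Reals Lra Lia Arith FunctionalExtensionality.
Open Scope R_scope.

(* Fix an interior point t = a + q + 1 of the time scale and perturb the
   local minimizer yt by e * eta, where eta is the bump equal to 1 at t and 0
   elsewhere on T; eta vanishes at both endpoints, so yt + e * eta is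
   admissible, and its norm distance to yt is |e| times a constant.
   1. Fermat: e |-> L(yt + e eta) has a local minimum at 0, so its derivative
      there, the first variation, vanishes.
   2. Chain rule: since the partial derivatives of L are continuous, the first
      variation is sum_s [eta(s+1) Lu + (aD^alpha eta) Lv + (sD_b^beta eta) Lw].
   3. Summation by parts for the Kronecker delta eta: the left fractional
      difference of eta paired with Lv is the right fractional difference
      (with endpoint rho(b)) of Lv at t - 1, and dually for Lw. *)

Lemma rsum_ext (f g : nat -> R) (n : nat) :
  (forall i, (i < n)%nat -> f i = g i) -> rsum f n = rsum g n.
Proof.
  induction n as [|n IH]; intros Hfg; simpl; [reflexivity|].
  rewrite IH by (intros i Hi; apply Hfg; lia). rewrite Hfg by lia. reflexivity.
Qed.

Lemma rsum_plus (f g : nat -> R) (n : nat) :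
  rsum (fun i => f i + g i) n = rsum f n + rsum g n.
Proof. induction n as [|n IH]; simpl; [lra|]. rewrite IH. lra. Qed.

Lemma rsum_minus (f g : nat -> R) (n : nat) :
  rsum (fun i => f i - g i) n = rsum f n - rsum g n.
Proof. induction n as [|n IH]; simpl; [lra|]. rewrite IH. lra. Qed.

Lemma rsum_scal (f : nat -> R) (c : R) (n : nat) :
  rsum (fun i => c * f i) n = c * rsum f n.
Proof. induction n as [|n IH]; simpl; [lra|]. rewrite IH. lra. Qed.

Lemma rsum_from (g : nat -> R) (p n : nat) :
  rsum (fun m => if le_dec p m then g m else 0) n = rsum (fun j => g (p + j)%nat) (n - p).
Proof.
  induction n as [|n IH]; [reflexivity|].
  cbn [rsum]. rewrite IH. destruct (le_dec p n).
  - replace (S n - p)%nat with (S (n - p)) by lia. cbn [rsum].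
    replace (p + (n - p))%nat with n by lia. reflexivity.
  - replace (S n - p)%nat with 0%nat by lia. replace (n - p)%nat with 0%nat by lia.
    simpl. lra.
Qed.

Lemma rsum_below (g : nat -> R) (q n : nat) : (q <= n)%nat ->
  rsum (fun m => if le_dec (S m) q then g m else 0) n = rsum g q.
Proof.
  induction n as [|n IH]; intros Hqn.
  - replace q with 0%nat by lia. reflexivity.
  - destruct (Nat.eq_dec q (S n)) as [->|Hne].
    + cbn [rsum]. destruct (le_dec (S n) (S n)); [|lia].
      rewrite (rsum_ext _ g); [reflexivity|].
      intros i Hi. destruct (le_dec (S i) (S n)); [reflexivity|lia].
    + cbn [rsum]. rewrite IH by lia. destruct (le_dec (S n) q); [lia|]. lra.
Qed.

Definition indic (p i : nat) : R := if Nat.eq_dec i p then 1 else 0.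

Lemma indic_S (p i : nat) : indic (S p) (S i) = indic p i.
Proof. unfold indic. destruct (Nat.eq_dec (S i) (S p)), (Nat.eq_dec i p); lia || lra. Qed.

Lemma rsum_indic_window (f : nat -> R) (s p len : nat) :
  rsum (fun j => f j * indic p (s + j)) len =
  if le_dec s p then (if lt_dec p (s + len) then f (p - s)%nat else 0) else 0.
Proof.
  induction len as [|len IH]; simpl.
  - destruct (le_dec s p); [destruct (lt_dec p (s + 0)); [lia|]|]; lra.
  - rewrite IH. unfold indic. destruct (Nat.eq_dec (s + len) p) as [<-|Hne].
    + destruct (le_dec s (s + len)); [|lia].
      destruct (lt_dec (s + len) (s + len)); [lia|].
      destruct (lt_dec (s + len) (s + S len)); [|lia].
      replace (s + len - s)%nat with len by lia. lra.
    + destruct (le_dec s p); [|lra].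
      destruct (lt_dec p (s + len)), (lt_dec p (s + S len)); try lia; lra.
Qed.

Lemma rsum_indic (f : nat -> R) (p len : nat) :
  rsum (fun j => f j * indic p j) len = if lt_dec p len then f p else 0.
Proof.
  rewrite (rsum_ext _ (fun j => f j * indic p (0 + j))) by reflexivity.
  rewrite rsum_indic_window. destruct (le_dec 0 p); [|lia].
  rewrite Nat.sub_0_r. reflexivity.
Qed.

Lemma rsum_indic_in (f : nat -> R) (p len : nat) : (p < len)%nat ->
  rsum (fun j => f j * indic p j) len = f p.
Proof. intros Hp. rewrite rsum_indic. destruct (lt_dec p len); [reflexivity|lia]. Qed.

Lemma rsum_indic_succ (f : nat -> R) (q len : nat) : (q < len)%nat ->
  rsum (fun j => f j * indic (q + 1) (j + 1)) len = f q.
Proof.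
  intros Hq. rewrite <- (rsum_indic_in f q len Hq). apply rsum_ext. intros i _.
  rewrite !Nat.add_1_r, indic_S. reflexivity.
Qed.

(* The kernel (t + nu - sigma(s))^(nu - 1) depends only on t - s. *)
Lemma gpow_kernel_shift (a nu y : R) (n1 n2 n3 n4 : nat) : (n2 + n3 = n1 + n4)%nat ->
  gpow (a + INR n1 + nu - (a + INR n2 + 1)) y = gpow (a + INR n3 + nu - (a + INR n4 + 1)) y.
Proof.
  intros Hn. apply (f_equal INR) in Hn. rewrite !plus_INR in Hn.
  f_equal. lra.
Qed.

(* Summation by parts for the left difference against a delta at q + 1:
   sum_n (aD^al delta)(n) fv(n) = (tD_{rho(b)}^al fv)(q). *)
Lemma sum_LFD_indic (a al : R) (k q : nat) (fv : nat -> R) : (q + 2 <= k)%nat ->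
  rsum (fun n => LFD a al (indic (q + 1)) n * fv n) k = RFD a al (k - 1) fv q.
Proof.
  intros Hk. set (p := (q + 1)%nat). set (c := (1 - al) / Gamma (1 - al + 1)).
  rewrite (rsum_ext _ (fun n => (fv n * indic p (n + 1) - fv n * indic p n)
     + c * (if le_dec p n then fv n * gpow (a + INR (n + 1) + (1 - al) - (a + INR p + 1)) (1 - al - 1) else 0)
     - c * (if le_dec (S p) n then fv n * gpow (a + INR n + (1 - al) - (a + INR p + 1)) (1 - al - 1) else 0))).
  2:{ intros n _. unfold LFD, LFS. fold c. rewrite !rsum_indic.
      destruct (lt_dec p (n + 1)), (le_dec p n), (lt_dec p n), (le_dec (S p) n); try lia; ring. }
  rewrite rsum_minus, rsum_plus, rsum_minus, !rsum_scal, !rsum_from.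
  unfold p. rewrite rsum_indic_succ, rsum_indic_in by lia.
  unfold RFD, RFS. fold c.
  replace (k - (q + 1))%nat with (k - 1 - q)%nat by lia.
  replace (k - S (q + 1))%nat with (k - 1 - (q + 1))%nat by lia.
  rewrite (rsum_ext (fun j => fv (q + 1 + j)%nat * _)
    (fun j => gpow (a + INR (q + 1 + j) + (1 - al) - (a + INR q + 1)) (1 - al - 1) * fv (q + 1 + j)%nat)).
  2:{ intros i _. rewrite Rmult_comm. apply Rmult_eq_compat_r, gpow_kernel_shift; lia. }
  rewrite (rsum_ext (fun j => fv (S (q + 1) + j)%nat * _)
    (fun j => gpow (a + INR (q + 1 + 1 + j) + (1 - al) - (a + INR (q + 1) + 1)) (1 - al - 1) * fv (q + 1 + 1 + j)%nat)).
  2:{ intros i _. rewrite Rmult_comm. replace (S (q + 1) + i)%nat with (q + 1 + 1 + i)%nat by lia.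
      apply Rmult_eq_compat_r, gpow_kernel_shift; lia. }
  ring.
Qed.

(* Dual summation by parts for the right difference:
   sum_n (nD_b^be delta)(n) fw(n) = (aD^be fw)(q). *)
Lemma sum_RFD_indic (a be : R) (k q : nat) (fw : nat -> R) : (q + 2 <= k)%nat ->
  rsum (fun n => RFD a be k (indic (q + 1)) n * fw n) k = LFD a be fw q.
Proof.
  intros Hk. set (p := (q + 1)%nat). set (c := (1 - be) / Gamma (1 - be + 1)).
  rewrite (rsum_ext _ (fun n => (fw n * indic p n - fw n * indic p (n + 1))
     + c * (if le_dec (S n) (S q) then fw n * gpow (a + INR (n + 1 + (p - (n + 1))) + (1 - be) - (a + INR n + 1)) (1 - be - 1) else 0)
     - c * (if le_dec (S n) q then fw n * gpow (a + INR (n + 1 + 1 + (p - (n + 1 + 1))) + (1 - be) - (a + INR (n + 1) + 1)) (1 - be - 1) else 0))).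
  2:{ intros n Hn. unfold RFD, RFS. fold c. rewrite !rsum_indic_window. unfold p in *.
      destruct (le_dec (n + 1) (q + 1)), (lt_dec (q + 1) (n + 1 + (k - n))), (le_dec (S n) (S q)),
        (le_dec (n + 1 + 1) (q + 1)), (lt_dec (q + 1) (n + 1 + 1 + (k - (n + 1)))), (le_dec (S n) q);
        try lia; ring. }
  rewrite rsum_minus, rsum_plus, rsum_minus, !rsum_scal, !rsum_below by lia.
  unfold p. rewrite rsum_indic_succ, rsum_indic_in by lia.
  unfold LFD, LFS. fold c.
  rewrite (rsum_ext (fun m => fw m * _)
    (fun i => gpow (a + INR (q + 1) + (1 - be) - (a + INR i + 1)) (1 - be - 1) * fw i) (S q)).
  2:{ intros i Hi. rewrite Rmult_comm. apply Rmult_eq_compat_r, gpow_kernel_shift; lia. }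
  rewrite (rsum_ext (fun m => fw m * _)
    (fun i => gpow (a + INR q + (1 - be) - (a + INR i + 1)) (1 - be - 1) * fw i) q).
  2:{ intros i Hi. rewrite Rmult_comm. apply Rmult_eq_compat_r, gpow_kernel_shift; lia. }
  replace (S q) with (q + 1)%nat by lia.
  ring.
Qed.

Lemma rsum_affine (h f g : nat -> R) (e : R) (n : nat) :
  rsum (fun i => h i * (f i + e * g i)) n = rsum (fun i => h i * f i) n + e * rsum (fun i => h i * g i) n.
Proof. induction n as [|n IH]; simpl; [ring|]. rewrite IH. ring. Qed.

Lemma rsum_scal_in (h g : nat -> R) (e : R) (n : nat) :
  rsum (fun i => h i * (e * g i)) n = e * rsum (fun i => h i * g i) n.
Proof. induction n as [|n IH]; simpl; [ring|]. rewrite IH. ring. Qed.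

Lemma LFD_affine (a al : R) (f g : nat -> R) (e : R) (n : nat) :
  LFD a al (fun i => f i + e * g i) n = LFD a al f n + e * LFD a al g n.
Proof. unfold LFD, LFS. rewrite !rsum_affine. ring. Qed.

Lemma LFD_scal (a al : R) (g : nat -> R) (e : R) (n : nat) :
  LFD a al (fun i => e * g i) n = e * LFD a al g n.
Proof. unfold LFD, LFS. rewrite !rsum_scal_in. ring. Qed.

Lemma RFD_affine (a al : R) (m : nat) (f g : nat -> R) (e : R) (n : nat) :
  RFD a al m (fun i => f i + e * g i) n = RFD a al m f n + e * RFD a al m g n.
Proof. unfold RFD, RFS. rewrite !rsum_affine. ring. Qed.

Lemma RFD_scal (a al : R) (m : nat) (g : nat -> R) (e : R) (n : nat) :
  RFD a al m (fun i => e * g i) n = e * RFD a al m g n.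
Proof. unfold RFD, RFS. rewrite !rsum_scal_in. ring. Qed.

Lemma rmax_nonneg (F : nat -> R) (n : nat) : 0 <= rmax F n.
Proof. induction n as [|n IH]; simpl; [lra|]. eapply Rle_trans; [exact IH|apply Rmax_l]. Qed.

Lemma rmax_abs_scal (F G : nat -> R) (e : R) (n : nat) : (forall i, G i = e * F i) ->
  rmax (fun i => Rabs (G i)) n = Rabs e * rmax (fun i => Rabs (F i)) n.
Proof.
  intros HG. induction n as [|n IH]; simpl; [ring|].
  rewrite IH, HG, Rabs_mult, RmaxRmult by apply Rabs_pos. reflexivity.
Qed.

Lemma ynorm_nonneg (a : R) (k : nat) (al be : R) (eta : R -> R) : 0 <= ynorm a k al be eta.
Proof.
  unfold ynorm.
  pose proof (rmax_nonneg (fun n => Rabs (onT a eta (n + 1)%nat)) k).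
  pose proof (rmax_nonneg (fun n => Rabs (LFD a al (onT a eta) n)) k).
  pose proof (rmax_nonneg (fun n => Rabs (RFD a be k (onT a eta) n)) k). lra.
Qed.

Lemma ynorm_scal (a : R) (k : nat) (al be : R) (eta : R -> R) (e : R) :
  ynorm a k al be (fun s => e * eta s) = Rabs e * ynorm a k al be eta.
Proof.
  unfold ynorm.
  rewrite (rmax_abs_scal (fun n => onT a eta (n + 1)%nat)
    (fun n => onT a (fun s => e * eta s) (n + 1)%nat) e) by reflexivity.
  rewrite (rmax_abs_scal (fun n => LFD a al (onT a eta) n)
    (fun n => LFD a al (onT a (fun s => e * eta s)) n) e)
    by (intros; apply (LFD_scal a al (onT a eta))).
  rewrite (rmax_abs_scal (fun n => RFD a be k (onT a eta) n)
    (fun n => RFD a be k (onT a (fun s => e * eta s)) n) e)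
    by (intros; apply (RFD_scal a be k (onT a eta))).
  ring.
Qed.

Lemma mvt_increment (g g' : R -> R) : (forall x, derivable_pt_lim g x (g' x)) ->
  forall x h, exists c, Rabs (c - x) <= Rabs h /\ g (x + h) - g x = h * g' c.
Proof.
  intros Hd x h. destruct (Rtotal_order h 0) as [Hh|[->|Hh]].
  - destruct (MVT_cor2 g g' (x + h) x) as [c [E Hc]]; [lra|intros; apply Hd|].
    exists c. rewrite !Rabs_left by lra. split; [lra|].
    replace (x + h - x) with h in * by ring. lra.
  - exists x. rewrite Rminus_diag, Rabs_R0, Rplus_0_r. split; [lra|ring].
  - destruct (MVT_cor2 g g' x (x + h)) as [c [E Hc]]; [lra|intros; apply Hd|].
    exists c. rewrite !Rabs_right by lra. split; [lra|].
    rewrite E. ring.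
Qed.

(* Changing one coordinate at a time, an increment of f is a sum of partial
   derivatives evaluated at intermediate points. *)
Lemma increment3 (f D0 D1 D2 : R -> R -> R -> R) (u v w h1 h2 h3 : R) :
  is_partial3 f 0 D0 -> is_partial3 f 1 D1 -> is_partial3 f 2 D2 ->
  exists c1 c2 c3,
    Rabs (c1 - u) <= Rabs h1 /\ Rabs (c2 - v) <= Rabs h2 /\ Rabs (c3 - w) <= Rabs h3 /\
    f (u + h1) (v + h2) (w + h3) - f u v w =
      h1 * D0 c1 (v + h2) (w + h3) + h2 * D1 u c2 (w + h3) + h3 * D2 u v c3.
Proof.
  intros H0 H1 H2.
  destruct (mvt_increment (fun x => f x (v + h2) (w + h3)) (fun x => D0 x (v + h2) (w + h3))
    (fun x => H0 x (v + h2) (w + h3)) u h1) as [c1 [B1 E1]].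
  destruct (mvt_increment (fun x => f u x (w + h3)) (fun x => D1 u x (w + h3))
    (fun x => H1 u x (w + h3)) v h2) as [c2 [B2 E2]].
  destruct (mvt_increment (fun x => f u v x) (fun x => D2 u v x)
    (fun x => H2 u v x) w h3) as [c3 [B3 E3]].
  exists c1, c2, c3. repeat split; try assumption. lra.
Qed.

Lemma directional_derivative (f D0 D1 D2 : R -> R -> R -> R) (u v w a1 a2 a3 : R) :
  is_partial3 f 0 D0 -> is_partial3 f 1 D1 -> is_partial3 f 2 D2 ->
  cont3 D0 -> cont3 D1 -> cont3 D2 ->
  derivable_pt_lim (fun e => f (u + e * a1) (v + e * a2) (w + e * a3)) 0
    (a1 * D0 u v w + a2 * D1 u v w + a3 * D2 u v w).
Proof.
  intros H0 H1 H2 C0 C1 C2 eps Heps.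
  set (M := Rabs a1 + Rabs a2 + Rabs a3 + 1).
  pose proof (Rabs_pos a1). pose proof (Rabs_pos a2). pose proof (Rabs_pos a3).
  assert (HM : 1 <= M) by (unfold M; lra).
  assert (He' : 0 < eps / M) by (apply Rdiv_lt_0_compat; lra).
  destruct (C0 u v w _ He') as [d0 [Hd0 K0]].
  destruct (C1 u v w _ He') as [d1 [Hd1 K1]].
  destruct (C2 u v w _ He') as [d2 [Hd2 K2]].
  set (m := Rmin d0 (Rmin d1 d2)).
  assert (Hm : 0 < m) by (unfold m; repeat apply Rmin_pos; auto).
  assert (m0 : m <= d0) by apply Rmin_l.
  assert (m1 : m <= d1) by (eapply Rle_trans; [apply Rmin_r|apply Rmin_l]).
  assert (m2 : m <= d2) by (eapply Rle_trans; [apply Rmin_r|apply Rmin_r]).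
  assert (Hdel : 0 < m / M) by (apply Rdiv_lt_0_compat; lra).
  exists (mkposreal _ Hdel). intros h Hh0 Hh. simpl in Hh.
  assert (Hsmall : forall z, Rabs z < M -> Rabs (h * z) < m).
  { intros z Hz. rewrite Rabs_mult.
    apply (Rmult_lt_compat_r M) in Hh; [|lra].
    replace (m / M * M) with m in Hh by (field; lra).
    pose proof (Rabs_pos h). pose proof (Rabs_pos z). nra. }
  assert (B1 : Rabs (h * a1) < m) by (apply Hsmall; unfold M; lra).
  assert (B2 : Rabs (h * a2) < m) by (apply Hsmall; unfold M; lra).
  assert (B3 : Rabs (h * a3) < m) by (apply Hsmall; unfold M; lra).
  destruct (increment3 f D0 D1 D2 u v w (h * a1) (h * a2) (h * a3) H0 H1 H2)
    as [c1 [c2 [c3 [Hc1 [Hc2 [Hc3 Einc]]]]]].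
  rewrite !Rplus_0_l, !Rmult_0_l, !Rplus_0_r.
  replace ((f (u + h * a1) (v + h * a2) (w + h * a3) - f u v w) / h
           - (a1 * D0 u v w + a2 * D1 u v w + a3 * D2 u v w))
    with (a1 * (D0 c1 (v + h * a2) (w + h * a3) - D0 u v w)
          + a2 * (D1 u c2 (w + h * a3) - D1 u v w) + a3 * (D2 u v c3 - D2 u v w))
    by (rewrite Einc; field; exact Hh0).
  assert (Q0 : Rabs (D0 c1 (v + h * a2) (w + h * a3) - D0 u v w) < eps / M).
  { apply K0; [lra|replace (v + h * a2 - v) with (h * a2) by ring; lra
                 |replace (w + h * a3 - w) with (h * a3) by ring; lra]. }
  assert (Q1 : Rabs (D1 u c2 (w + h * a3) - D1 u v w) < eps / M).
  { apply K1; [rewrite Rminus_diag, Rabs_R0; lra|lra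
                 |replace (w + h * a3 - w) with (h * a3) by ring; lra]. }
  assert (Q2 : Rabs (D2 u v c3 - D2 u v w) < eps / M).
  { apply K2; [rewrite Rminus_diag, Rabs_R0; lra|rewrite Rminus_diag, Rabs_R0; lra|lra]. }
  eapply Rle_lt_trans; [apply Rabs_triang|].
  eapply Rle_lt_trans; [apply Rplus_le_compat_r, Rabs_triang|].
  rewrite !Rabs_mult.
  apply Rle_lt_trans with ((M - 1) * (eps / M)).
  - assert (HM1 : M - 1 = Rabs a1 + Rabs a2 + Rabs a3) by (unfold M; ring).
    rewrite HM1. pose proof (Rabs_pos (D0 c1 (v + h * a2) (w + h * a3) - D0 u v w)).
    pose proof (Rabs_pos (D1 u c2 (w + h * a3) - D1 u v w)).
    pose proof (Rabs_pos (D2 u v c3 - D2 u v w)). nra.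
  - replace ((M - 1) * (eps / M)) with (eps - eps / M) by (field; lra). lra.
Qed.

(* Partial derivatives are unique, so the first partials supplied by C2_3
   are the given ones, and those are continuous. *)
Lemma C2_partial_continuous (f g : R -> R -> R -> R) (i : nat) :
  (i < 3)%nat -> C2_3 f -> is_partial3 f i g -> cont3 g.
Proof.
  intros Hi [D [DD [HD [HC _]]]] Hg.
  assert (Heq : forall u v w, D i u v w = g u v w)
    by (intros; eapply uniqueness_limite; [apply HD|apply Hg]; exact Hi).
  intros u v w eps Heps. destruct (HC i Hi u v w eps Heps) as [d [Hd Hball]].
  exists d. split; [exact Hd|]. intros u' v' w' Hu' Hv' Hw'.
  rewrite <- !Heq. apply Hball; assumption.
Qed.

Lemma derivable_rsum (F : nat -> R -> R) (d : nat -> R) (x : R) (n : nat) :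
  (forall i, (i < n)%nat -> derivable_pt_lim (F i) x (d i)) ->
  derivable_pt_lim (fun e => rsum (fun i => F i e) n) x (rsum d n).
Proof.
  induction n as [|n IH]; intros H; simpl.
  - apply derivable_pt_lim_const.
  - apply (derivable_pt_lim_plus (fun e => rsum (fun i => F i e) n) (F n)).
    + apply IH. intros; apply H; lia.
    + apply H; lia.
Qed.

Lemma fermat (Phi : R -> R) (l d : R) : derivable_pt_lim Phi 0 l -> 0 < d ->
  (forall e, Rabs e < d -> Phi 0 <= Phi e) -> l = 0.
Proof.
  intros H Hd Hmin. pose (pr := exist _ l H : derivable_pt Phi 0).
  rewrite <- (derive_pt_eq_0 Phi 0 l pr H).
  apply deriv_minimum with (- d) d; try lra.
  intros x H1 H2. apply Hmin. apply Rabs_def1; lra.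
Qed.

Definition traj (a al be : R) (k : nat) (Y : nat -> R) (F : R -> R -> R -> R -> R) (n : nat) : R :=
  F (a + INR n) (Y (n + 1)%nat) (LFD a al Y n) (RFD a be k Y n).

Definition first_variation (a al be : R) (k : nat) (Lu Lv Lw : R -> R -> R -> R -> R)
  (Y E : nat -> R) : R :=
  rsum (fun n => E (n + 1)%nat * traj a al be k Y Lu n + LFD a al E n * traj a al be k Y Lv n
                 + RFD a be k E n * traj a al be k Y Lw n) k.

Lemma Lfun_line_derivative (a : R) (k : nat) (al be : R) (L Lu Lv Lw : R -> R -> R -> R -> R)
  (yt eta : R -> R) :
  (forall n, (n < k)%nat -> C2_3 (L (a + INR n))) ->
  (forall n, (n < k)%nat -> is_partial3 (L (a + INR n)) 0 (Lu (a + INR n))) ->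
  (forall n, (n < k)%nat -> is_partial3 (L (a + INR n)) 1 (Lv (a + INR n))) ->
  (forall n, (n < k)%nat -> is_partial3 (L (a + INR n)) 2 (Lw (a + INR n))) ->
  derivable_pt_lim (fun e => Lfun a k al be L (fun s => yt s + e * eta s)) 0
    (first_variation a al be k Lu Lv Lw (onT a yt) (onT a eta)).
Proof.
  intros HC Hu Hv Hw. set (Y := onT a yt). set (E := onT a eta).
  replace (fun e => Lfun a k al be L (fun s => yt s + e * eta s)) with
    (fun e => rsum (fun n => L (a + INR n) (Y (n + 1)%nat + e * E (n + 1)%nat)
        (LFD a al Y n + e * LFD a al E n) (RFD a be k Y n + e * RFD a be k E n)) k).
  2:{ apply functional_extensionality. intros e. unfold Lfun.
      apply rsum_ext. intros n _.
      change (onT a (fun s => yt s + e * eta s)) with (fun i => Y i + e * E i).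
      rewrite LFD_affine, RFD_affine. reflexivity. }
  apply derivable_rsum. intros n Hn.
  apply directional_derivative; auto.
  - apply (C2_partial_continuous (L (a + INR n)) _ 0); auto.
  - apply (C2_partial_continuous (L (a + INR n)) _ 1); auto.
  - apply (C2_partial_continuous (L (a + INR n)) _ 2); auto.
Qed.

Lemma local_minimizer_first_variation (a : R) (k : nat) (al be : R)
  (L : R -> R -> R -> R -> R) (A B : R) (yt eta : R -> R) (l : R) :
  local_minimizer a k al be L A B yt -> eta a = 0 -> eta (a + INR k) = 0 ->
  derivable_pt_lim (fun e => Lfun a k al be L (fun s => yt s + e * eta s)) 0 l -> l = 0.
Proof.
  intros [HA [HB [d [Hd Hmin]]]] Ha Hb Hder.
  set (N := ynorm a k al be eta). assert (HN : 0 <= N) by apply ynorm_nonneg.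
  apply (fermat _ l (d / (N + 1)) Hder); [apply Rdiv_lt_0_compat; lra|].
  intros e He.
  replace (fun s => yt s + 0 * eta s) with yt by (apply functional_extensionality; intros; ring).
  apply Hmin; [rewrite Ha, HA; ring|rewrite Hb, HB; ring|].
  replace (fun s => yt s + e * eta s - yt s) with (fun s => e * eta s)
    by (apply functional_extensionality; intros; ring).
  rewrite ynorm_scal. fold N.
  apply (Rmult_lt_compat_r (N + 1)) in He; [|lra].
  replace (d / (N + 1) * (N + 1)) with d in He by (field; lra).
  pose proof (Rabs_pos e). nra.
Qed.

Lemma first_variation_indic (a al be : R) (k q : nat) (Lu Lv Lw : R -> R -> R -> R -> R)
  (Y : nat -> R) : (q + 2 <= k)%nat ->
  first_variation a al be k Lu Lv Lw Y (indic (q + 1)) =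
  traj a al be k Y Lu q + RFD a al (k - 1) (traj a al be k Y Lv) q
  + LFD a be (traj a al be k Y Lw) q.
Proof.
  intros Hk. unfold first_variation.
  rewrite !rsum_plus, sum_LFD_indic, sum_RFD_indic by lia.
  rewrite (rsum_ext _ (fun n => traj a al be k Y Lu n * indic (q + 1) (n + 1)))
    by (intros; ring).
  rewrite rsum_indic_succ by lia. ring.
Qed.

Definition bump (c s : R) : R := if Req_dec_T s c then 1 else 0.

Lemma onT_bump (a : R) (p : nat) : onT a (bump (a + INR p)) = indic p.
Proof.
  apply functional_extensionality. intros i. unfold onT, bump, indic.
  destruct (Req_dec_T (a + INR i) (a + INR p)) as [E|E], (Nat.eq_dec i p) as [->|Hne];
    try reflexivity.
  - exfalso. apply Hne, INR_eq. lra.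
  - exfalso. apply E. reflexivity.
Qed.

Lemma bump_off (a : R) (p i : nat) : i <> p -> bump (a + INR p) (a + INR i) = 0.
Proof.
  intros Hne. unfold bump. destruct (Req_dec_T (a + INR i) (a + INR p)) as [E|E]; [|reflexivity].
  exfalso. apply Hne, INR_eq. lra.
Qed.

Theorem theoremZ (a : R) (k : nat) (alpha beta A B : R)
  (L : R -> R -> R -> R -> R) (Lu Lv Lw : R -> R -> R -> R -> R) (yt : R -> R) :
  (2 <= k)%nat ->
  0 < alpha <= 1 -> 0 < beta <= 1 ->
  (forall n, (n < k)%nat -> C2_3 (L (a + INR n))) ->
  (forall n, (n < k)%nat -> is_partial3 (L (a + INR n)) 0 (Lu (a + INR n))) ->
  (forall n, (n < k)%nat -> is_partial3 (L (a + INR n)) 1 (Lv (a + INR n))) ->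
  (forall n, (n < k)%nat -> is_partial3 (L (a + INR n)) 2 (Lw (a + INR n))) ->
  local_minimizer a k alpha beta L A B yt ->
  let Y := onT a yt in
  let br (F : R -> R -> R -> R -> R) (n : nat) : R :=
    F (a + INR n) (Y (n + 1)%nat) (LFD a alpha Y n) (RFD a beta k Y n) in
  forall n : nat, (n + 2 <= k)%nat ->
    br Lu n + RFD a alpha (k - 1) (br Lv) n + LFD a beta (br Lw) n = 0.
Proof.
  intros _ _ _ HC Hu Hv Hw Hmin Y br q Hq.
  set (eta := bump (a + INR (q + 1))).
  transitivity (first_variation a alpha beta k Lu Lv Lw Y (onT a eta)).
  { unfold eta. rewrite onT_bump, first_variation_indic by lia. reflexivity. }
  apply (local_minimizer_first_variation a k alpha beta L A B yt eta _ Hmin).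
  - pose proof (bump_off a (q + 1) 0 ltac:(lia)) as Ha.
    rewrite INR_0, Rplus_0_r in Ha. exact Ha.
  - apply bump_off. lia.
  - apply Lfun_line_derivative; assumption.
Qed.
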